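(* Let $\underline\gamma$ be an $\infty$-complete infinite path in a Rauzy diagram, starting at $\pi$, and let $w\in\mathbb R^{\mathcal A}$, $w\neq0$. The set $\mathrm{Aff}(\underline\gamma,w)$ is nonempty if and only if the hyperplane $\{\lambda:\sum_\alpha\lambda_\alpha w_\alpha=0\}$ contains some $\lambda\in(\mathbb R_{>0})^{\mathcal A}$ such that the standard i.e.m. $T_{\pi,\lambda}$ has Rauzy–Veech path equal to $\underline\gamma$. In that case the set $\mathrm{Aff}^{(1)}(\underline\gamma,w)$, parametrized by the vector of lengths $(|I^t_\alpha|)_{\alpha\in\mathcal A}$, is convex and compact.
   Context: Affine i.e.m., standard i.e.m. $T_{\pi,\lambda}$, slope vector, Rauzy–Veech algorithm and Rauzy diagram as usual: the Rauzy–Veech step replaces the map by its first return to $(0,\max(u^t_{d-1},u^b_{d-1}))$ where $u^t_{d-1},u^b_{d-1}$ are the left endpoints of the last top and last bottom intervals; the arrow has top type with winner $\alpha_t$ if $u^t_{d-1}<u^b_{d-1}$ and bottom type with winner $\alpha_b$ otherwise ($\pi_t(\alpha_t)=\pi_b(\alpha_b)=d$). A map with no connection has an infinite Rauzy–Veech path. A path is complete if every letter of $\mathcal A$ is the winner of at least one of its arrows, and an infinite path is $\infty$-complete if it is a concatenation of infinitely many complete paths. $\mathrm{Aff}(\underline\gamma,w)$ is the set of affine i.e.m. with slope vector $\exp w$ (i.e. $|I^b_\alpha|=e^{w_\alpha}|I^t_\alpha|$) whose Rauzy–Veech path is $\underline\gamma$; $\mathrm{Aff}^{(1)}(\underline\gamma,w)$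 is the subset of those defined on $[0,1]$. *)

From Stdlib Require Import Reals List.
From mathcomp Require Import all_boot.

Set Implicit Arguments.
Unset Strict Implicit.
Unset Printing Implicit Defensive.

(* Combinatorial data.  pi = (pi_t, pi_b), positions are 0-based:           *)
(* pi_t a = k  means  I^t_a is the (k+1)-th top interval; the last position *)
(* is #|A|.-1 (the paper's "d").                                            *)

Definition comb_data (A : finType) : Type := ((A -> nat) * (A -> nat))%type.

Definition valid_comb (A : finType) (pi : comb_data A) : Prop :=
  (forall a, (pi.1 a < #|A|)%N) /\ injective pi.1 /\
  (forall a, (pi.2 a < #|A|)%N) /\ injective pi.2.

Definition irreducible (A : finType) (pi : comb_data A) : Prop :=
  forall k : nat, (0 < k)%N -> (k < #|A|)%N ->
    exists a : A, (pi.1 a < k)%N <> (pi.2 a < k)%N.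

Definition lastl (A : finType) (p : A -> nat) : option A :=
  [pick a | p a == #|A|.-1].

Definition ins_after (A : finType) (p : A -> nat) (w l : A) : A -> nat :=
  fun b => if b == l then (p w).+1
           else if (p w < p b)%N then (p b).+1 else p b.

(* Arrow of the Rauzy diagram of type [top] (true = top type, false = bottom
   type) leaving pi: returns (winner, endpoint). *)
Definition rauzy_move (A : finType) (pi : comb_data A) (top : bool)
  : option (A * comb_data A) :=
  match lastl pi.1, lastl pi.2 with
  | Some at_, Some ab =>
      if top then Some (at_, (pi.1, ins_after pi.2 at_ ab))
      else Some (ab, (ins_after pi.1 ab at_, pi.2))
  | _, _ => None
  end.

(* An infinite path in the Rauzy diagram starting at pi is given by pi and
   the sequence eps of the types of its arrows.  comb_path pi eps n is its
   n-th vertex, winner_at pi eps n the winner of its n-th arrow. *)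
Fixpoint comb_path (A : finType) (pi : comb_data A) (eps : nat -> bool) (n : nat)
  : option (comb_data A) :=
  match n with
  | 0 => Some pi
  | S m => match comb_path pi eps m with
           | Some p => option_map snd (rauzy_move p (eps m))
           | None => None
           end
  end.

Definition winner_at (A : finType) (pi : comb_data A) (eps : nat -> bool) (n : nat)
  : option A :=
  match comb_path pi eps n with
  | Some p => option_map fst (rauzy_move p (eps n))
  | None => None
  end.

Definition complete_seg (A : finType) (pi : comb_data A) (eps : nat -> bool)
  (m n : nat) : Prop :=
  forall a : A, exists k : nat, (m <= k)%N /\ (k < n)%N /\ winner_at pi eps k = Some a.

Definition inf_complete (A : finType) (pi : comb_data A) (eps : nat -> bool) : Prop :=
  exists t : nat -> nat, t 0 = 0 /\
    forall k, (t k < t k.+1)%N /\ complete_seg pi eps (t k) (t k.+1).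

(* Affine interval exchange maps, encoded by (pi, top lengths, bottom       *)
(* lengths): T maps I^t_a affinely and increasingly onto I^b_a.             *)

Local Open Scope R_scope.

Record aiem (A : finType) : Type := AIem {
  ai_pi : comb_data A;
  ai_lt : A -> R;
  ai_lb : A -> R
}.

Definition Rsum (A : finType) (f : A -> R) : R := \big[Rplus/R0]_(a : A) f a.

(* left endpoints (domain starting at 0) *)
Definition u_top (A : finType) (T : aiem A) (a : A) : R :=
  \big[Rplus/R0]_(b : A | ((ai_pi T).1 b < (ai_pi T).1 a)%N) ai_lt T b.
Definition u_bot (A : finType) (T : aiem A) (a : A) : R :=
  \big[Rplus/R0]_(b : A | ((ai_pi T).2 b < (ai_pi T).2 a)%N) ai_lb T b.

Definition upd (A : finType) (f : A -> R) (a : A) (x : R) : A -> R :=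
  fun b => if b == a then x else f b.

(* One Rauzy-Veech step: first return map to (0, max(u^t_{d-1}, u^b_{d-1})).
   Returns the type of the arrow (true = top) and the induced map; None if
   u^t_{d-1} = u^b_{d-1} (the algorithm stops). *)
Definition rv_step (A : finType) (T : aiem A) : option (bool * aiem A) :=
  let pi := ai_pi T in
  let lt := ai_lt T in
  let lb := ai_lb T in
  match lastl pi.1, lastl pi.2 with
  | Some at_, Some ab =>
      if Rlt_dec (u_top T at_) (u_bot T ab) then
        (* top type, winner at_: slope of T on I^t_{at_} *)
        let s := Rdiv (lb at_) (lt at_) in
        Some (true, AIem (pi.1, ins_after pi.2 at_ ab)
                         (upd lt at_ (lt at_ - lb ab))
                         (upd (upd lb ab (s * lb ab)) at_ (lb at_ - s * lb ab)))
      else if Rlt_dec (u_bot T ab) (u_top T at_) then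
        (* bottom type, winner ab: slope of T on I^t_{ab} *)
        let s := Rdiv (lb ab) (lt ab) in
        Some (false, AIem (ins_after pi.1 ab at_, pi.2)
                          (upd (upd lt at_ (Rdiv (lt at_) s)) ab (lt ab - Rdiv (lt at_) s))
                          (upd lb ab (lb ab - lt at_)))
      else None
  | _, _ => None
  end.

Definition rv_path_is (A : finType) (T : aiem A) (eps : nat -> bool) : Prop :=
  exists S : nat -> aiem A, S 0%nat = T /\
    forall n, rv_step (S n) = Some (eps n, S n.+1).

(* affine i.e.m. with combinatorics pi, top lengths lam, slope vector exp w *)
Definition aff_of (A : finType) (pi : comb_data A) (lam w : A -> R) : aiem A :=
  AIem pi lam (fun a => exp (w a) * lam a).

Definition Aff (A : finType) (pi : comb_data A) (eps : nat -> bool) (w : A -> R)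
  (lam : A -> R) : Prop :=
  (forall a, 0 < lam a) /\
  Rsum lam = Rsum (fun a => exp (w a) * lam a) /\
  rv_path_is (aff_of pi lam w) eps.

Definition Aff1 (A : finType) (pi : comb_data A) (eps : nat -> bool) (w : A -> R)
  (lam : A -> R) : Prop :=
  Aff pi eps w lam /\ Rsum lam = R1.

Definition std_iem (A : finType) (pi : comb_data A) (lam : A -> R) : aiem A :=
  AIem pi lam lam.

Definition convex_set (A : finType) (K : (A -> R) -> Prop) : Prop :=
  forall x y (t : R), K x -> K y -> (0 <= t <= 1) ->
    K (fun a => t * x a + (1 - t) * y a).

Definition open_set (A : finType) (U : (A -> R) -> Prop) : Prop :=
  forall x, U x -> exists eps : R, (0 < eps) /\
    forall y, (forall a, Rabs (y a - x a) < eps) -> U y.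

Definition compact_set (A : finType) (K : (A -> R) -> Prop) : Prop :=
  forall (I : Type) (U : I -> (A -> R) -> Prop),
    (forall i, open_set (U i)) ->
    (forall x, K x -> exists i, U i x) ->
    exists l : list I, forall x, K x -> exists i, In i l /\ U i x.

(* Along gamma the Rauzy-Veech algorithm acts linearly on the data of an
   affine map: its log-slopes evolve by [log_slopes] (the loser's log-slope
   gains the winner's) and its top lengths by the invertible linear maps
   [lengths w n].  A balanced affine map with top lengths lam follows gamma
   iff all the vectors [lengths w n lam] are positive ([follows_path_iff]);
   standard maps are the case w = 0.  Two quantities are conserved along
   the path ([length_balance], [std_pairing]):
     sum_a (e^{V_n a} - 1) G^w_n(lam) a     and     sum_a G^0_n(mu) a V_n a,
   where V_n are the log-slopes of w and G^w_n = [lengths w n].  By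
   infinity-completeness, a nonzero solution of all the inequalities
   G_n >= 0 is automatically positive ([lengths_pos]).

   The equivalence of the theorem transfers a solution from one side to the
   other at each finite level N: a positive vector orthogonal to u exists iff
   u takes both signs, and u, e^u - 1 have the same signs
   ([level_set_nonempty]).  Compactness of the standard simplex then passes
   to the limit N -> oo ([limit_solution]).  Convexity of Aff^(1) follows
   from linearity of [lengths w n], compactness from Heine-Borel in the unit
   cube, Aff^(1) being cut out by closed conditions. *)
From Pilot Require Import Defs.
From Stdlib Require Import Reals List.
From mathcomp Require Import all_boot.
From HB Require Import structures.
From Stdlib Require Import Lra Lia Classical ClassicalEpsilon FunctionalExtensionality.

Set Implicit Arguments.
Unset Strict Implicit.
Unset Printing Implicit Defensive.

Local Open Scope R_scope.

(* Real addition as a commutative monoid law, so that bigop lemmas apply to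
   the sums [Rsum] of Defs. *)
HB.instance Definition _ :=
  Monoid.isComLaw.Build R R0 Rplus
    (fun x y z => esym (Rplus_assoc x y z)) Rplus_comm Rplus_0_l.

Section Sums.
Variable A : finType.

Lemma Rsum_ext (f g : A -> R) : (forall a, f a = g a) -> Rsum f = Rsum g.
Proof. by move=> H; apply: eq_bigr => a _; exact: H. Qed.

Lemma Rsum_add (f g : A -> R) : Rsum (fun a => f a + g a) = Rsum f + Rsum g.
Proof. by rewrite /Rsum big_split. Qed.

Lemma Rsum_scal (c : R) (f : A -> R) : Rsum (fun a => c * f a) = c * Rsum f.
Proof.
apply: (big_rec2 (fun y1 y2 => y1 = c * y2)); first by ring.
by move=> i y1 y2 _ ->; ring.
Qed.

Lemma Rsum_lin (c d : R) (f g : A -> R) :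
  Rsum (fun a => c * f a + d * g a) = c * Rsum f + d * Rsum g.
Proof. by rewrite Rsum_add !Rsum_scal. Qed.

Lemma Rsum_sub (f g : A -> R) : Rsum (fun a => f a - g a) = Rsum f - Rsum g.
Proof.
rewrite (Rsum_ext (g := fun a => 1 * f a + (-1) * g a)); last by move=> a; ring.
by rewrite Rsum_lin; ring.
Qed.

Lemma Rsum_D1 (f : A -> R) a : Rsum f = f a + \big[Rplus/R0]_(b | b != a) f b.
Proof. exact: bigD1. Qed.

Lemma big_nonneg (P : pred A) (f : A -> R) :
  (forall a, 0 <= f a) -> 0 <= \big[Rplus/R0]_(b | P b) f b.
Proof. by move=> H; apply: (big_ind (fun x => 0 <= x)) => //; [lra | move=> x y; lra]. Qed.

Lemma Rsum_nonneg (f : A -> R) : (forall a, 0 <= f a) -> 0 <= Rsum f.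
Proof. exact: big_nonneg. Qed.

Lemma Rsum_ge_term (f : A -> R) a : (forall b, 0 <= f b) -> f a <= Rsum f.
Proof. by move=> H; rewrite (Rsum_D1 f a); have := big_nonneg (fun b => b != a) H; lra. Qed.

Lemma Rsum_two_diff (f g : A -> R) a b : a != b ->
  (forall c, c != a -> c != b -> f c = g c) ->
  Rsum f - Rsum g = (f a - g a) + (f b - g b).
Proof.
move=> ab H; rewrite -Rsum_sub (Rsum_D1 _ a) (bigD1 b) /=; last by rewrite eq_sym.
rewrite big1; first by ring.
by move=> c /andP [ca cb]; rewrite H //; ring.
Qed.

Lemma Rsum1_nonzero (f : A -> R) : Rsum f = 1 -> exists a, f a <> 0.
Proof.
move=> H; apply: NNPP => H'.
suff : Rsum f = 0 by lra.
rewrite (Rsum_ext (g := fun _ => 0 * 0)); first by rewrite Rsum_scal; ring.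
by move=> a; apply: NNPP => h; apply: H'; exists a; lra.
Qed.

End Sums.

Section Rows.
Local Open Scope nat_scope.
Variable A : finType.

Definition valid_row (f : A -> nat) : Prop := (forall a, f a < #|A|) /\ injective f.

Lemma lastl_val (f : A -> nat) a : lastl f = Some a -> f a = #|A|.-1.
Proof. by rewrite /lastl; case: pickP => // x /eqP Hx [<-]. Qed.

(* a nonempty valid row has a last letter, by the pigeonhole principle *)
Lemma lastl_exists (f : A -> nat) (a0 : A) : valid_row f -> exists a, lastl f = Some a.
Proof.
move=> [Hr Hi]; rewrite /lastl; case: pickP => [x _|H]; first by exists x.
have Hlt a : f a < #|A|.-1.
  have := Hr a; have := negbT (H a).
  by case: #|A| => // n; rewrite ltnS /= => h1 h2; rewrite ltn_neqAle h1 h2.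
pose g (a : A) : 'I_(#|A|.-1) := Ordinal (Hlt a).
have gi : injective g by move=> x y [] /Hi.
have := leq_card g gi; rewrite card_ord.
have : 0 < #|A| by apply/card_gt0P; exists a0.
by case: #|A| => //= n _; rewrite ltnn.
Qed.

Lemma lastl_lt (f : A -> nat) a b :
  valid_row f -> lastl f = Some a -> (f b < f a) = (b != a).
Proof.
move=> [Hr Hi] /lastl_val Ha; rewrite Ha.
case: (b =P a) => [->|Hba] /=; first by rewrite Ha ltnn.
have := Hr b; have : f b != f a by apply/eqP => /Hi.
by rewrite Ha; case: #|A| => // n; rewrite ltnS /= => ne le; rewrite ltn_neqAle ne le.
Qed.

Lemma ins_after_valid (f : A -> nat) w l :
  valid_row f -> lastl f = Some l -> w != l -> valid_row (ins_after f w l).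
Proof.
move=> Hv Hl wl; have [Hr Hi] := Hv.
have Hlt b : b != l -> f b < f l by rewrite (lastl_lt b Hv Hl).
have Hw := Hlt w wl.
split.
- move=> b; rewrite /ins_after; case: (b =P l) => [_|/eqP bl].
    exact: leq_ltn_trans Hw (Hr l).
  by case: ifP => _; [exact: leq_ltn_trans (Hlt b bl) (Hr l) | exact: Hr].
- move=> x y; rewrite /ins_after.
  case: (x =P l) => [->|/eqP xl]; case: (y =P l) => [->|/eqP yl] //.
  + by case: ifP => Hy /eqP; rewrite ?eqSS => /eqP E; move: Hy; rewrite -E ?ltnn ?ltnSn.
  + by case: ifP => Hx /eqP; rewrite ?eqSS => /eqP E; move: Hx; rewrite E ?ltnn ?ltnSn.
  + case: ifP => /ltP Hx; case: ifP => /ltP Hy; first by move=> [] /Hi.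
    * by move=> E; exfalso; lia.
    * by move=> E; exfalso; lia.
    * exact: Hi.
Qed.

(* inserting the last letter after itself destroys the last position: such a
   degenerate move (top last = bottom last) leaves the Rauzy diagram *)
Lemma ins_after_self_no_last (f : A -> nat) a :
  valid_row f -> lastl f = Some a -> lastl (ins_after f a a) = None.
Proof.
move=> [Hr Hi] Ha; have Hfa := lastl_val Ha.
rewrite /lastl; case: pickP => // x; rewrite /ins_after.
case: (x =P a) => [->|/eqP xa].
  by rewrite Hfa; case: #|A| => // n /eqP /= H; exfalso; lia.
case: ifP => H.
  by move: H; rewrite Hfa; have := Hr x; case: #|A| => //= n /ltP h1 /ltP h2 /eqP h3; lia.
by move/eqP => Hx; move: xa; rewrite -Hfa in Hx; rewrite (Hi _ _ Hx) eqxx.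
Qed.

End Rows.

(* Infinity-completeness forces
   every vertex to be a genuine vertex of the Rauzy diagram (both last letters
   exist and differ), so the path has well-defined vertices [vertex n], last
   letters [top_last n], [bot_last n], winners and losers. *)
Section CombPath.
Local Open Scope nat_scope.
Variable A : finType.
Variables (pi : comb_data A) (eps : nat -> bool) (a0 : A).
Hypothesis pi_valid : valid_comb pi.
Hypothesis eps_complete : inf_complete pi eps.

Definition valid_pair (p : comb_data A) : Prop := valid_row p.1 /\ valid_row p.2.

Lemma complete_after K : exists t1 t2 t3, K <= t1 /\ t1 < t2 /\ t2 < t3 /\
  complete_seg pi eps t1 t2 /\ complete_seg pi eps t2 t3.
Proof.
case: eps_complete => t [t0 Ht].
have tK k : k <= t k by elim: k => // k IH; exact: leq_ltn_trans IH (Ht k).1.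
exists (t K), (t K.+1), (t K.+2).
by split; [exact: tK | split; [exact: (Ht K).1 | split; [exact: (Ht K.+1).1 | split; [exact: (Ht K).2 | exact: (Ht K.+1).2]]]].
Qed.

Lemma winner_recurs n : exists k, n <= k /\ winner_at pi eps k <> None.
Proof.
case: (complete_after n) => t1 [t2 [_ [h1 [_ [_ [s1 _]]]]]].
case: (s1 a0) => k [k1 [_ kw]]; exists k; split; first exact: leq_trans k1.
by rewrite kw.
Qed.

Lemma stuck_no_winner n p : comb_path pi eps n = Some p ->
  (lastl p.1 = None \/ lastl p.2 = None) ->
  forall k, n <= k -> winner_at pi eps k = None.
Proof.
move=> Hp Hl.
have no_move : forall e, rauzy_move p e = None.
  by move=> e; rewrite /rauzy_move; case: Hl => ->; last case: (lastl p.1).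
have Hn1 : comb_path pi eps n.+1 = None by rewrite /= Hp no_move.
have after k : n < k -> comb_path pi eps k = None.
  elim: k => // k IH; rewrite ltnS leq_eqVlt => /orP [/eqP <- //|] /IH /=.
  by move=> ->.
move=> k; rewrite leq_eqVlt => /orP [/eqP <-|Hk].
  by rewrite /winner_at Hp no_move.
by rewrite /winner_at after.
Qed.

Lemma distinct_last n p : comb_path pi eps n = Some p -> valid_pair p ->
  exists at_ ab, lastl p.1 = Some at_ /\ lastl p.2 = Some ab /\ at_ != ab.
Proof.
move=> Hp [v1 v2].
case: (lastl_exists a0 v1) => at_ Ha; case: (lastl_exists a0 v2) => ab Hb.
exists at_, ab; do 2 split => //; apply/eqP => E; subst ab.
pose p' := if eps n then (p.1, ins_after p.2 at_ at_) else (ins_after p.1 at_ at_, p.2).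
have Hn1 : comb_path pi eps n.+1 = Some p'.
  by rewrite /= Hp /rauzy_move Ha Hb /p'; case: (eps n).
have Hl : lastl p'.1 = None \/ lastl p'.2 = None.
  rewrite /p'; case: (eps n).
  - by right; exact: ins_after_self_no_last v2 Hb.
  - by left; exact: ins_after_self_no_last v1 Ha.
case: (winner_recurs n.+1) => k [hk hw]; exact: hw (stuck_no_winner Hn1 Hl hk).
Qed.

Lemma path_vertex_good n : exists p at_ ab, comb_path pi eps n = Some p /\
  valid_pair p /\ lastl p.1 = Some at_ /\ lastl p.2 = Some ab /\ at_ != ab.
Proof.
have valid_pi : valid_pair pi by case: pi_valid => [h1 [h2 [h3 h4]]].
elim: n => [|n [p [at_ [ab [Hp [Hvp [Ha [Hb Hab]]]]]]]].
  case: (distinct_last (n := 0) (erefl _) valid_pi) => at_ [ab H].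
  by exists pi, at_, ab.
pose p' := if eps n then (p.1, ins_after p.2 at_ ab) else (ins_after p.1 ab at_, p.2).
have Hn1 : comb_path pi eps n.+1 = Some p'.
  by rewrite /= Hp /rauzy_move Ha Hb /p'; case: (eps n).
have Hv' : valid_pair p'.
  case: Hvp => v1 v2; rewrite /p'; case: (eps n); split => //=.
  - exact: ins_after_valid v2 Hb Hab.
  - by apply: (ins_after_valid v1 Ha); rewrite eq_sym.
case: (distinct_last Hn1 Hv') => at' [ab' H].
by exists p', at', ab'.
Qed.

Definition vertex n : comb_data A := odflt pi (comb_path pi eps n).
Definition top_last n : A := odflt a0 (lastl (vertex n).1).
Definition bot_last n : A := odflt a0 (lastl (vertex n).2).
Definition winner n : A := if eps n then top_last n else bot_last n.
Definition loser n : A := if eps n then bot_last n else top_last n.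

Lemma vertex_eq n : comb_path pi eps n = Some (vertex n).
Proof. by case: (path_vertex_good n) => p [? [? [Hp _]]]; rewrite /vertex Hp. Qed.

Lemma vertex_valid n : valid_pair (vertex n).
Proof. by case: (path_vertex_good n) => p [? [? [Hp [H _]]]]; rewrite /vertex Hp. Qed.

Lemma top_last_eq n : lastl (vertex n).1 = Some (top_last n).
Proof.
by case: (path_vertex_good n) => p [a [b [Hp [_ [H _]]]]]; rewrite /top_last /vertex Hp H.
Qed.

Lemma bot_last_eq n : lastl (vertex n).2 = Some (bot_last n).
Proof.
by case: (path_vertex_good n) => p [a [b [Hp [_ [_ [H _]]]]]]; rewrite /bot_last /vertex Hp H.
Qed.

Lemma top_bot_last_neq n : top_last n <> bot_last n.
Proof.
case: (path_vertex_good n) => p [a [b [Hp [_ [H1 [H2 H]]]]]].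
by apply/eqP; rewrite /top_last /bot_last /vertex Hp H1 H2.
Qed.

Lemma vertex_step n : vertex n.+1 =
  if eps n then ((vertex n).1, ins_after (vertex n).2 (top_last n) (bot_last n))
  else (ins_after (vertex n).1 (bot_last n) (top_last n), (vertex n).2).
Proof.
have := vertex_eq n.+1; rewrite /= vertex_eq /rauzy_move top_last_eq bot_last_eq.
by case: (eps n) => /= [[]|[]].
Qed.

Lemma winner_at_eq n : winner_at pi eps n = Some (winner n).
Proof.
by rewrite /winner_at vertex_eq /rauzy_move top_last_eq bot_last_eq /winner; case: (eps n).
Qed.

Lemma winner_stays_last n : winner n = top_last n.+1 \/ winner n = bot_last n.+1.
Proof. by rewrite /winner /top_last /bot_last vertex_step; case: (eps n); [left|right]. Qed.

End CombPath.

Lemma upd_same (A : finType) (f : A -> R) a x : upd f a x a = x.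
Proof. by rewrite /upd eqxx. Qed.

Lemma upd_other (A : finType) (f : A -> R) a x b : b <> a -> upd f a x b = f b.
Proof. by move=> H; rewrite /upd; case: (b =P a). Qed.

(* An affine
   map at step n of the path is described by its top lengths and its
   log-slopes; both evolve by explicit formulas involving only the two last
   letters. *)
Section Dynamics.
Variable A : finType.
Variables (pi : comb_data A) (eps : nat -> bool) (a0 : A).
Hypothesis pi_valid : valid_comb pi.
Hypothesis eps_complete : inf_complete pi eps.

Local Notation aT m := (top_last pi eps a0 m).
Local Notation aB m := (bot_last pi eps a0 m).

Lemma aT_aB m : aT m <> aB m.
Proof. exact: top_bot_last_neq. Qed.

Lemma aB_aT m : aB m <> aT m.
Proof. by move=> E; apply: (aT_aB (m := m)). Qed.

Ltac updsimp :=
  repeat first [ rewrite upd_same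
               | rewrite upd_other; last by (apply: aT_aB || apply: aB_aT || assumption) ].

Fixpoint log_slopes (w : A -> R) (n : nat) : A -> R :=
  match n with
  | 0%nat => w
  | S m => let v := log_slopes w m in
      if eps m then upd v (aB m) (v (aB m) + v (aT m))
      else upd v (aT m) (v (aT m) + v (aB m))
  end.

Definition len_step m (v g : A -> R) : A -> R :=
  if eps m then upd g (aT m) (g (aT m) - exp (v (aB m)) * g (aB m))
  else upd (upd g (aT m) (g (aT m) / exp (v (aB m))))
         (aB m) (g (aB m) - g (aT m) / exp (v (aB m))).

(* its inverse, which has nonnegative coefficients *)
Definition len_unstep m (v y : A -> R) : A -> R :=
  if eps m then upd y (aT m) (y (aT m) + exp (v (aB m)) * y (aB m))
  else upd (upd y (aT m) (y (aT m) * exp (v (aB m)))) (aB m) (y (aB m) + y (aT m)).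

Fixpoint lengths (w : A -> R) (n : nat) (lam : A -> R) : A -> R :=
  match n with
  | 0%nat => lam
  | S m => len_step m (log_slopes w m) (lengths w m lam)
  end.

Lemma letter_cases m (b : A) : b = aT m \/ b = aB m \/ (b <> aT m /\ b <> aB m).
Proof.
case: (b =P aT m) => [->|h1]; first by left.
by case: (b =P aB m) => [->|h2]; [right; left | right; right].
Qed.

Lemma len_step_top m v g : len_step m v g (aT m) =
  if eps m then g (aT m) - exp (v (aB m)) * g (aB m) else g (aT m) / exp (v (aB m)).
Proof. by rewrite /len_step; case: (eps m); updsimp. Qed.

Lemma len_step_bot m v g : len_step m v g (aB m) =
  if eps m then g (aB m) else g (aB m) - g (aT m) / exp (v (aB m)).
Proof. by rewrite /len_step; case: (eps m); updsimp. Qed.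

Lemma len_step_other m v g b : b <> aT m -> b <> aB m -> len_step m v g b = g b.
Proof. by move=> h1 h2; rewrite /len_step; case: (eps m); updsimp. Qed.

Lemma len_unstep_top m v g : len_unstep m v g (aT m) =
  if eps m then g (aT m) + exp (v (aB m)) * g (aB m) else g (aT m) * exp (v (aB m)).
Proof. by rewrite /len_unstep; case: (eps m); updsimp. Qed.

Lemma len_unstep_bot m v g : len_unstep m v g (aB m) =
  if eps m then g (aB m) else g (aB m) + g (aT m).
Proof. by rewrite /len_unstep; case: (eps m); updsimp. Qed.

Lemma len_unstep_other m v g b : b <> aT m -> b <> aB m -> len_unstep m v g b = g b.
Proof. by move=> h1 h2; rewrite /len_unstep; case: (eps m); updsimp. Qed.

Lemma log_slopes_top w m : log_slopes w m.+1 (aT m) =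
  if eps m then log_slopes w m (aT m) else log_slopes w m (aT m) + log_slopes w m (aB m).
Proof. by rewrite /=; case: (eps m); updsimp. Qed.

Lemma log_slopes_bot w m : log_slopes w m.+1 (aB m) =
  if eps m then log_slopes w m (aB m) + log_slopes w m (aT m) else log_slopes w m (aB m).
Proof. by rewrite /=; case: (eps m); updsimp. Qed.

Lemma log_slopes_other w m b : b <> aT m -> b <> aB m -> log_slopes w m.+1 b = log_slopes w m b.
Proof. by move=> h1 h2; rewrite /=; case: (eps m); updsimp. Qed.

Lemma log_slopes_zero n : log_slopes (fun _ => 0) n = fun _ => 0.
Proof.
elim: n => [|n IH] //=; rewrite IH; apply: functional_extensionality => b.
by rewrite /upd; case: (eps n); case: (_ == _); ring.
Qed.

Lemma exp_neq0 x : exp x <> 0.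
Proof. by have := exp_pos x; lra. Qed.

Lemma len_step_unstep m v y : len_step m v (len_unstep m v y) = y.
Proof.
apply: functional_extensionality => b; have He := exp_neq0 (x := v (aB m)).
case: (letter_cases m b) => [->|[->|[h1 h2]]].
- by rewrite len_step_top len_unstep_top len_unstep_bot; case: (eps m); field.
- by rewrite len_step_bot len_unstep_top len_unstep_bot; case: (eps m); field.
- by rewrite len_step_other // len_unstep_other.
Qed.

Lemma len_unstep_step m v y : len_unstep m v (len_step m v y) = y.
Proof.
apply: functional_extensionality => b; have He := exp_neq0 (x := v (aB m)).
case: (letter_cases m b) => [->|[->|[h1 h2]]].
- by rewrite len_unstep_top len_step_top len_step_bot; case: (eps m); field.
- by rewrite len_unstep_bot len_step_top len_step_bot; case: (eps m); field.
- by rewrite len_unstep_other // len_step_other.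
Qed.

Lemma lengths_surj w N x : exists lam, lengths w N lam = x.
Proof.
elim: N x => [|N IH] x; first by exists x.
case: (IH (len_unstep N (log_slopes w N) x)) => lam H; exists lam.
by rewrite /= H len_step_unstep.
Qed.

Lemma len_unstep_nonneg m v y : (forall a, 0 <= y a) -> forall a, 0 <= len_unstep m v y a.
Proof.
move=> H a; have := H (aT m); have := H (aB m); have He := exp_pos (v (aB m)).
case: (letter_cases m a) => [->|[->|[h1 h2]]].
- by rewrite len_unstep_top; case: (eps m); nra.
- by rewrite len_unstep_bot; case: (eps m); nra.
- by rewrite len_unstep_other //; move=> _ _; exact: H.
Qed.

Lemma lengths_nonneg_before w n lam : (forall a, 0 <= lengths w n lam a) ->
  forall k, (k <= n)%N -> forall a, 0 <= lengths w k lam a.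
Proof.
elim: n => [|n IH] H k; first by rewrite leqn0 => /eqP ->.
rewrite leq_eqVlt => /orP [/eqP -> //|]; rewrite ltnS; apply: IH.
rewrite -(len_unstep_step n (log_slopes w n) (lengths w n lam)).
exact: len_unstep_nonneg.
Qed.

Lemma len_step_lin m v c d x y :
  len_step m v (fun a => c * x a + d * y a) = fun a => c * len_step m v x a + d * len_step m v y a.
Proof.
apply: functional_extensionality => b; have He := exp_neq0 (x := v (aB m)).
case: (letter_cases m b) => [->|[->|[h1 h2]]].
- by rewrite !len_step_top; case: (eps m); field.
- by rewrite !len_step_bot; case: (eps m); field.
- by rewrite !len_step_other.
Qed.

Lemma lengths_lin w n c d x y : lengths w n (fun a => c * x a + d * y a) =
  fun a => c * lengths w n x a + d * lengths w n y a.
Proof. by elim: n => [|n IH] //=; rewrite IH len_step_lin. Qed.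

Lemma lengths_scal w n c x : lengths w n (fun a => c * x a) = fun a => c * lengths w n x a.
Proof.
have E f : (fun a : A => c * f a) = fun a => c * f a + 0 * f a.
  by apply: functional_extensionality => a; ring.
by rewrite E lengths_lin -E.
Qed.

(* first conserved quantity: the difference between total bottom length and
   total top length of the affine map *)
Lemma length_balance_step w m g :
  Rsum (fun a => (exp (log_slopes w m.+1 a) - 1) * len_step m (log_slopes w m) g a) =
  Rsum (fun a => (exp (log_slopes w m a) - 1) * g a).
Proof.
apply: Rminus_diag_uniq; rewrite (Rsum_two_diff _ _ (a := aT m) (b := aB m)); last first.
- by move=> c /eqP h1 /eqP h2; rewrite log_slopes_other // len_step_other.
- by apply/eqP; exact: aT_aB.
rewrite log_slopes_top log_slopes_bot len_step_top len_step_bot.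
have He := exp_neq0 (x := log_slopes w m (aB m)).
by case: (eps m); rewrite ?exp_plus; field.
Qed.

Lemma length_balance w n lam :
  Rsum (fun a => (exp (log_slopes w n a) - 1) * lengths w n lam a) =
  Rsum (fun a => (exp (w a) - 1) * lam a).
Proof. by elim: n => [|n IH] //=; rewrite length_balance_step. Qed.

Lemma std_pairing_step w m g :
  Rsum (fun a => len_step m (fun _ => 0) g a * log_slopes w m.+1 a) =
  Rsum (fun a => g a * log_slopes w m a).
Proof.
apply: Rminus_diag_uniq; rewrite (Rsum_two_diff _ _ (a := aT m) (b := aB m)); last first.
- by move=> c /eqP h1 /eqP h2; rewrite log_slopes_other // len_step_other.
- by apply/eqP; exact: aT_aB.
rewrite log_slopes_top log_slopes_bot len_step_top len_step_bot exp_0.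
by case: (eps m); field.
Qed.

Lemma std_pairing w n mu :
  Rsum (fun a => lengths (fun _ => 0) n mu a * log_slopes w n a) = Rsum (fun a => mu a * w a).
Proof.
elim: n => [|n IH] //=; rewrite log_slopes_zero in IH *.
by rewrite std_pairing_step.
Qed.

End Dynamics.

Lemma set_chain_mono (T : finType) (Z : nat -> {set T}) :
  (forall n, Z n \subset Z n.+1) -> forall n k, (n <= k)%N -> Z n \subset Z k.
Proof.
move=> Zmono n; elim=> [|k IH]; first by rewrite leqn0 => /eqP ->.
rewrite leq_eqVlt => /orP [/eqP -> //|]; rewrite ltnS => /IH H.
exact: subset_trans H (Zmono k).
Qed.

Lemma set_chain_stabilizes (T : finType) (Z : nat -> {set T}) :
  (forall n, Z n \subset Z n.+1) -> exists K, forall k, (K <= k)%N -> Z k = Z K.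
Proof.
move=> Zmono; have Zmono_le := set_chain_mono Zmono.
suff : forall d n, (#|T| - #|Z n| <= d)%N -> exists K, forall k, (K <= k)%N -> Z k = Z K.
  by move=> H; exact: (H #|T| 0%N (leq_subr _ _)).
elim=> [|d IH] n Hd.
- exists n => k Hk; apply/eqP; rewrite eq_sym eqEcard Zmono_le //=.
  by move: Hd; rewrite leqn0 subn_eq0 => /(leq_trans (max_card (mem (Z k)))).
- case: (classic (forall k, (n <= k)%N -> Z k = Z n)) => [H|H]; first by exists n.
  have [k [Hk Hne]] : exists k, (n <= k)%N /\ Z k <> Z n.
    by apply: NNPP => H'; apply: H => k Hk; apply: NNPP => H2; apply: H'; exists k.
  have Hlt : (#|Z n| < #|Z k|)%N.
    by apply: proper_card; rewrite properEneq Zmono_le // andbT; apply/eqP => E; apply: Hne.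
  apply: (IH k); have := max_card (mem (Z k)).
  by move: Hd Hlt => /leP Hd /ltP Hlt /leP hc; apply/leP; rewrite -!minusE in Hd *; lia.
Qed.

Definition is_zero (r : R) : bool := if Req_dec_T r 0 then true else false.

Lemma is_zeroP r : is_zero r = true <-> r = 0.
Proof. by rewrite /is_zero; case: Req_dec_T. Qed.

(* The set of
   letters of length zero grows along the path and is closed under passing
   from the winner to the loser; once it has stabilized, a letter outside it
   that wins keeps the winners outside it forever, whereas completeness makes
   every letter win again. *)
Section Positivity.
Variable A : finType.
Variables (pi : comb_data A) (eps : nat -> bool) (a0 : A).
Hypothesis pi_valid : valid_comb pi.
Hypothesis eps_complete : inf_complete pi eps.
Variables w lam : A -> R.
Hypothesis lengths_nonneg : forall n a, 0 <= lengths pi eps a0 w n lam a.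
Hypothesis lam_nonzero : exists a, lam a <> 0.

Local Notation aT m := (top_last pi eps a0 m).
Local Notation aB m := (bot_last pi eps a0 m).
Local Notation Gn n := (lengths pi eps a0 w n lam).

Definition zero_set n : {set A} := [set a | is_zero (Gn n a)].

Lemma in_zero_set n a : a \in zero_set n <-> Gn n a = 0.
Proof. by rewrite inE; exact: is_zeroP. Qed.

Lemma zero_set_grows n : zero_set n \subset zero_set n.+1.
Proof.
apply/subsetP => a /in_zero_set H0; apply/in_zero_set.
have := lengths_nonneg n.+1 a; rewrite /=.
have Ha := lengths_nonneg n (aT n); have Hb := lengths_nonneg n (aB n).
have He := exp_pos (log_slopes pi eps a0 w n (aB n)).
have Hq : 0 <= Gn n (aT n) / exp (log_slopes pi eps a0 w n (aB n)).
  by apply: Rmult_le_pos => //; left; exact: Rinv_0_lt_compat.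
move: H0; case: (letter_cases pi eps a0 n a) => [->|[->|[h1 h2]]] H0.
- rewrite len_step_top // H0; case: (eps n); first nra.
  by rewrite /Rdiv Rmult_0_l.
- by rewrite len_step_bot // H0; case: (eps n) => //; lra.
- by rewrite len_step_other.
Qed.

Lemma zero_set_loser n : winner pi eps a0 n \in zero_set n -> loser pi eps a0 n \in zero_set n.
Proof.
rewrite !in_zero_set /winner /loser.
have := lengths_nonneg n.+1 (if eps n then aT n else aB n); rewrite /=.
have Ha := lengths_nonneg n (aT n); have Hb := lengths_nonneg n (aB n).
have He := exp_pos (log_slopes pi eps a0 w n (aB n)).
case E: (eps n) => H1 H0.
- by move: H1; rewrite len_step_top // E H0 => H1; nra.
- move: H1; rewrite len_step_bot // E H0 => H1.
  have Hq : 0 <= Gn n (aT n) / exp (log_slopes pi eps a0 w n (aB n)).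
    by apply: Rmult_le_pos => //; left; exact: Rinv_0_lt_compat.
  have Hz : Gn n (aT n) / exp (log_slopes pi eps a0 w n (aB n)) = 0 by lra.
  by move: Hz; rewrite /Rdiv => /Rmult_integral [//|/Rinv_neq_0_compat]; lra.
Qed.

(* lengths w n is injective, so the zero set is never everything *)
Lemma zero_set_not_full n : exists y, y \notin zero_set n.
Proof.
apply: NNPP => H; case: lam_nonzero => b; apply.
have Hz : lengths pi eps a0 w n lam = lengths pi eps a0 w n (fun a => 0 * lam a).
  rewrite lengths_scal //; apply: functional_extensionality => a.
  have : a \in zero_set n by apply: NNPP => Ha; apply: H; exists a; exact/negP.
  by move/in_zero_set => ->; ring.
have inj x y : lengths pi eps a0 w n x = lengths pi eps a0 w n y -> x = y.
  elim: n {H Hz} x y => [|n IH] x y //= /(f_equal (len_unstep pi eps a0 n (log_slopes pi eps a0 w n))).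
  by rewrite !len_unstep_step // => /IH.
by rewrite (inj _ _ Hz); ring.
Qed.

Lemma winners_avoid_zero_set K k :
  (forall k, (K <= k)%N -> zero_set k = zero_set K) -> (K <= k)%N ->
  winner pi eps a0 k \notin zero_set K -> forall j, winner pi eps a0 (k + j) \notin zero_set K.
Proof.
move=> HK Kk Hk; elim => [|j IH]; first by rewrite addn0.
apply/negP => Hw; move/negP: IH; apply.
have Kj : (K <= (k + j).+1)%N by rewrite -addnS; exact: leq_trans (leq_addr _ _).
rewrite -(HK _ Kj) in Hw *; rewrite addnS in Hw Kj *.
have Hl := zero_set_loser Hw.
case: (winner_stays_last a0 pi_valid eps_complete (k + j)) => ->; move: Hw Hl;
  by rewrite /winner /loser; case: (eps (k + j).+1).
Qed.

Lemma lengths_pos n a : 0 < Gn n a.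
Proof.
case: (Rle_lt_or_eq_dec _ _ (lengths_nonneg n a)) => // /esym Ha; exfalso.
have Zmono := set_chain_mono zero_set_grows.
case: (set_chain_stabilizes zero_set_grows) => K0 HK0.
pose K := maxn n K0.
have HK k : (K <= k)%N -> zero_set k = zero_set K.
  move=> Hk; rewrite HK0; last exact: leq_trans (leq_maxr _ _) Hk.
  by rewrite HK0 // leq_maxr.
have aZ : a \in zero_set K.
  by move/in_zero_set: Ha; apply/subsetP; apply: Zmono (leq_maxl _ _).
case: (zero_set_not_full K) => y yZ.
case: (complete_after eps_complete K) => t1 [t2 [t3 [h1 [h2 [h3 [s1 s2]]]]]].
case: (s1 y) => k1 [k1a [k1b]]; rewrite (winner_at_eq a0) // => -[k1w].
case: (s2 a) => k2 [k2a [k2b]]; rewrite (winner_at_eq a0) // => -[k2w].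
have k12 : (k1 <= k2)%N by apply: ltnW; exact: leq_trans k1b k2a.
have yw : winner pi eps a0 k1 \notin zero_set K by rewrite k1w.
have := winners_avoid_zero_set HK (leq_trans h1 k1a) yw (k2 - k1)%N.
by rewrite subnKC // k2w aZ.
Qed.

End Positivity.

Section FollowPath.
Variable A : finType.
Variables (pi : comb_data A) (eps : nat -> bool) (a0 : A).
Hypothesis pi_valid : valid_comb pi.
Hypothesis eps_complete : inf_complete pi eps.
Variable w : A -> R.

Local Notation aT m := (top_last pi eps a0 m).
Local Notation aB m := (bot_last pi eps a0 m).
Local Notation Gn n lam := (lengths pi eps a0 w n lam).
Local Notation Vn n := (log_slopes pi eps a0 w n).

Definition aff_at n lam : aiem A :=
  AIem (vertex pi eps n) (Gn n lam) (fun b => exp (Vn n b) * Gn n lam b).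

Lemma sum_before_last (p : A -> nat) a (f : A -> R) : valid_row p -> lastl p = Some a ->
  \big[Rplus/R0]_(b | (p b < p a)%N) f b = Rsum f - f a.
Proof.
move=> Hp Ha; rewrite (Rsum_D1 f a).
have -> : \big[Rplus/R0]_(b | (p b < p a)%N) f b = \big[Rplus/R0]_(b | b != a) f b.
  by apply: eq_bigl => b; rewrite (lastl_lt b Hp Ha).
ring.
Qed.

Lemma u_top_last n lam : u_top (aff_at n lam) (aT n) = Rsum (Gn n lam) - Gn n lam (aT n).
Proof.
apply: sum_before_last; first exact: (vertex_valid a0 pi_valid eps_complete n).1.
exact: top_last_eq.
Qed.

Lemma u_bot_last n lam : u_bot (aff_at n lam) (aB n) =
  Rsum (fun b => exp (Vn n b) * Gn n lam b) - exp (Vn n (aB n)) * Gn n lam (aB n).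
Proof.
apply: sum_before_last; first exact: (vertex_valid a0 pi_valid eps_complete n).2.
exact: bot_last_eq.
Qed.

Lemma total_length_eq n lam : Rsum lam = Rsum (fun a => exp (w a) * lam a) ->
  Rsum (fun b => exp (Vn n b) * Gn n lam b) = Rsum (Gn n lam).
Proof.
move=> H; have := length_balance a0 pi_valid eps_complete w n lam.
have E (u g : A -> R) :
    Rsum (fun a => (exp (u a) - 1) * g a) = Rsum (fun a => exp (u a) * g a) - Rsum g.
  by rewrite -Rsum_sub; apply: Rsum_ext => a; ring.
by rewrite !E H; lra.
Qed.

(* the map produced by a top-type step of [rv_step] is [aff_at n.+1] *)
Lemma top_step_state n lam : eps n = true -> Gn n lam (aT n) <> 0 ->
  AIem ((vertex pi eps n).1, ins_after (vertex pi eps n).2 (aT n) (aB n))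
    (upd (Gn n lam) (aT n) (Gn n lam (aT n) - exp (Vn n (aB n)) * Gn n lam (aB n)))
    (upd (upd (fun b => exp (Vn n b) * Gn n lam b) (aB n)
       ((exp (Vn n (aT n)) * Gn n lam (aT n)) / Gn n lam (aT n) * (exp (Vn n (aB n)) * Gn n lam (aB n))))
       (aT n) (exp (Vn n (aT n)) * Gn n lam (aT n) -
          (exp (Vn n (aT n)) * Gn n lam (aT n)) / Gn n lam (aT n) * (exp (Vn n (aB n)) * Gn n lam (aB n))))
  = aff_at n.+1 lam.
Proof.
move=> E Hz; rewrite /aff_at (vertex_step a0) //= /len_step E; congr AIem.
apply: functional_extensionality => b.
have n1 : (aT n == aB n) = false by apply/eqP; exact: top_bot_last_neq.
have n2 : (aB n == aT n) = false by rewrite eq_sym.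
case: (letter_cases pi eps a0 n b) => [->|[->|[/eqP/negPf m1 /eqP/negPf m2]]].
- by rewrite /upd eqxx n1; field.
- by rewrite /upd eqxx n2 exp_plus; field.
- by rewrite /upd m1 m2.
Qed.

(* the map produced by a bottom-type step of [rv_step] is [aff_at n.+1] *)
Lemma bot_step_state n lam : eps n = false -> Gn n lam (aB n) <> 0 ->
  AIem (ins_after (vertex pi eps n).1 (aB n) (aT n), (vertex pi eps n).2)
    (upd (upd (Gn n lam) (aT n) (Gn n lam (aT n) /
        ((exp (Vn n (aB n)) * Gn n lam (aB n)) / Gn n lam (aB n))))
       (aB n) (Gn n lam (aB n) - Gn n lam (aT n) /
        ((exp (Vn n (aB n)) * Gn n lam (aB n)) / Gn n lam (aB n))))
    (upd (fun b => exp (Vn n b) * Gn n lam b) (aB n)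
       (exp (Vn n (aB n)) * Gn n lam (aB n) - Gn n lam (aT n)))
  = aff_at n.+1 lam.
Proof.
move=> E Hz; have He := exp_pos (Vn n (aB n)).
have -> : (exp (Vn n (aB n)) * Gn n lam (aB n)) / Gn n lam (aB n) = exp (Vn n (aB n)).
  by field.
rewrite /aff_at (vertex_step a0) //= /len_step E; congr AIem.
apply: functional_extensionality => b.
have n1 : (aT n == aB n) = false by apply/eqP; exact: top_bot_last_neq.
have n2 : (aB n == aT n) = false by rewrite eq_sym.
case: (letter_cases pi eps a0 n b) => [->|[->|[/eqP/negPf m1 /eqP/negPf m2]]].
- by rewrite /upd eqxx n1 exp_plus; field; lra.
- by rewrite /upd eqxx n2; field; lra.
- by rewrite /upd m1 m2.
Qed.

Lemma rv_step_aff_at n lam : rv_step (aff_at n lam) =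
  let T := aff_at n lam in
  let lt := ai_lt T in let lb := ai_lb T in
  let p := vertex pi eps n in
  if Rlt_dec (u_top T (aT n)) (u_bot T (aB n)) then
    let s := lb (aT n) / lt (aT n) in
    Some (true, AIem (p.1, ins_after p.2 (aT n) (aB n))
                     (upd lt (aT n) (lt (aT n) - lb (aB n)))
                     (upd (upd lb (aB n) (s * lb (aB n))) (aT n) (lb (aT n) - s * lb (aB n))))
  else if Rlt_dec (u_bot T (aB n)) (u_top T (aT n)) then
    let s := lb (aB n) / lt (aB n) in
    Some (false, AIem (ins_after p.1 (aB n) (aT n), p.2)
                      (upd (upd lt (aT n) (lt (aT n) / s)) (aB n) (lt (aB n) - lt (aT n) / s))
                      (upd lb (aB n) (lb (aB n) - lt (aT n))))
  else None.
Proof. by rewrite /rv_step /= (top_last_eq a0) // (bot_last_eq a0). Qed.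

(* the winner's new length measures the overlap compared by the algorithm *)
Lemma winner_new_length n lam : Gn n.+1 lam (winner pi eps a0 n) =
  if eps n then Gn n lam (aT n) - exp (Vn n (aB n)) * Gn n lam (aB n)
  else Gn n lam (aB n) - Gn n lam (aT n) / exp (Vn n (aB n)).
Proof.
rewrite /winner /=; case E: (eps n).
- by rewrite (len_step_top a0) // E.
- by rewrite (len_step_bot a0) // E.
Qed.

Lemma rv_step_follows n lam : Rsum lam = Rsum (fun a => exp (w a) * lam a) ->
  (forall a, 0 < Gn n lam a) ->
  (forall e T', rv_step (aff_at n lam) = Some (e, T') ->
     e = eps n -> T' = aff_at n.+1 lam /\ 0 < Gn n.+1 lam (winner pi eps a0 n)) /\
  (0 < Gn n.+1 lam (winner pi eps a0 n) -> rv_step (aff_at n lam) = Some (eps n, aff_at n.+1 lam)).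
Proof.
move=> Htot Hpos; rewrite winner_new_length rv_step_aff_at /= u_top_last u_bot_last.
rewrite total_length_eq //.
have Ha := Hpos (aT n); have Hb := Hpos (aB n); have He := exp_pos (Vn n (aB n)).
have bot_cmp : Gn n lam (aT n) / exp (Vn n (aB n)) < Gn n lam (aB n) <->
               Gn n lam (aT n) < exp (Vn n (aB n)) * Gn n lam (aB n).
  split => H.
  - by move: (Rmult_lt_compat_r _ _ _ He H); rewrite /Rdiv Rmult_assoc Rinv_l; lra.
  - apply: (Rmult_lt_reg_r (exp (Vn n (aB n)))) => //.
    by rewrite /Rdiv Rmult_assoc Rinv_l; lra.
split.
- move=> e T'; case: Rlt_dec => H1.
    by move=> [<- <-] E; rewrite -E; split; [rewrite -top_step_state //; lra | lra].
  case: Rlt_dec => H2 // [<- <-] E; rewrite -E.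
  split; first by rewrite -bot_step_state //; lra.
  suff : Gn n lam (aT n) / exp (Vn n (aB n)) < Gn n lam (aB n) by lra.
  by apply/bot_cmp; lra.
- case E: (eps n) => Hw.
  + case: Rlt_dec => H; last by exfalso; apply: H; lra.
    by rewrite -top_step_state //; lra.
  + have /bot_cmp Hw' : Gn n lam (aT n) / exp (Vn n (aB n)) < Gn n lam (aB n) by lra.
    case: Rlt_dec => H; first by exfalso; lra.
    case: Rlt_dec => H2; last by exfalso; apply: H2; lra.
    by rewrite -bot_step_state //; lra.
Qed.

Lemma len_step_pos_other n lam b : (forall a, 0 < Gn n lam a) ->
  b <> winner pi eps a0 n -> 0 < Gn n.+1 lam b.
Proof.
move=> Hpos; rewrite /winner /=; have He := exp_pos (Vn n (aB n)).
case: (letter_cases pi eps a0 n b) => [->|[->|[h1 h2]]]; case E: (eps n) => Hb //.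
- by rewrite (len_step_top a0) // E; apply: Rdiv_lt_0_compat.
- by rewrite (len_step_bot a0) // E.
- by rewrite len_step_other.
- by rewrite len_step_other.
Qed.

Lemma follows_path_iff lam : (forall a, 0 < lam a) ->
  Rsum lam = Rsum (fun a => exp (w a) * lam a) ->
  (rv_path_is (aff_of pi lam w) eps <-> forall n a, 0 < Gn n lam a).
Proof.
move=> Hl Htot; split.
- case=> S [S0 HS].
  suff H n : S n = aff_at n lam /\ forall a, 0 < Gn n lam a by move=> n; case: (H n).
  elim: n => [|n [IH1 IH2]]; first by split.
  have [Hstep _] := rv_step_follows Htot IH2.
  have := HS n; rewrite IH1 => /Hstep /(_ (erefl _)) [h1 h2]; split => // b.
  by case: (b =P winner pi eps a0 n) => [->|hb] //; exact: len_step_pos_other.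
- move=> H; exists (fun n => aff_at n lam); split => // n.
  by apply: (rv_step_follows Htot (H n)).2; exact: H.
Qed.

End FollowPath.

Section Topology.
Variable A : finType.

Definition cont (f : (A -> R) -> R) : Prop := forall x e, 0 < e -> exists d, 0 < d /\
  forall y, (forall a, Rabs (y a - x a) < d) -> Rabs (f y - f x) < e.

Definition closed_set (K : (A -> R) -> Prop) : Prop := forall x, ~ K x -> exists e, 0 < e /\
  forall y, (forall a, Rabs (y a - x a) < e) -> ~ K y.

Lemma cont_ext (f g : (A -> R) -> R) : (forall y, f y = g y) -> cont g -> cont f.
Proof.
move=> H hg x e he; case: (hg x e he) => d [hd Hd]; exists d; split => // y Hy.
by rewrite !H; exact: Hd.
Qed.

Lemma cont_proj a : cont (fun y => y a).
Proof. by move=> x e he; exists e; split => // y H; exact: H. Qed.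

Lemma cont_const c : cont (fun _ => c).
Proof. by move=> x e he; exists 1; split; [lra | move=> y _; rewrite Rminus_diag Rabs_R0]. Qed.

Lemma cont_add f g : cont f -> cont g -> cont (fun y => f y + g y).
Proof.
move=> hf hg x e he.
case: (hf x (e / 2)) => [|d1 [hd1 H1]]; first lra.
case: (hg x (e / 2)) => [|d2 [hd2 H2]]; first lra.
exists (Rmin d1 d2); split; first exact: Rmin_pos.
move=> y Hy.
have h1 := H1 y (fun a => Rlt_le_trans _ _ _ (Hy a) (Rmin_l _ _)).
have h2 := H2 y (fun a => Rlt_le_trans _ _ _ (Hy a) (Rmin_r _ _)).
have -> : f y + g y - (f x + g x) = (f y - f x) + (g y - g x) by ring.
by apply: Rle_lt_trans (Rabs_triang _ _) _; lra.
Qed.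

Lemma cont_scal c f : cont f -> cont (fun y => c * f y).
Proof.
move=> hf x e he; have hc := Rabs_pos c.
case: (hf x (e / (Rabs c + 1))) => [|d [hd H]]; first by apply: Rdiv_lt_0_compat; lra.
exists d; split => // y Hy; rewrite -Rmult_minus_distr_l Rabs_mult.
have h := H y Hy.
have : Rabs c * Rabs (f y - f x) <= Rabs c * (e / (Rabs c + 1)).
  by apply: Rmult_le_compat_l => //; lra.
have : Rabs c * (e / (Rabs c + 1)) < e.
  apply: (Rmult_lt_reg_r (Rabs c + 1)); first lra.
  by rewrite Rmult_assoc /Rdiv Rmult_assoc Rinv_l; nra.
lra.
Qed.

Lemma cont_sub f g : cont f -> cont g -> cont (fun y => f y - g y).
Proof.
move=> hf hg; apply: (cont_ext (g := fun y => f y + -1 * g y)); first by move=> y; ring.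
by apply: cont_add => //; exact: cont_scal.
Qed.

Lemma cont_sum (F : A -> (A -> R) -> R) : (forall a, cont (F a)) ->
  cont (fun y => Rsum (fun a => F a y)).
Proof.
move=> HF; rewrite /Rsum; elim: (index_enum A) => [|a s IH].
  by apply: (cont_ext (g := fun _ => 0)); [move=> y; rewrite big_nil | exact: cont_const].
apply: (cont_ext (g := fun y => F a y + \big[Rplus/R0]_(b <- s) F b y)).
  by move=> y; rewrite big_cons.
exact: cont_add.
Qed.

Lemma cont_lin (c : A -> R) : cont (fun mu => Rsum (fun a => mu a * c a)).
Proof.
apply: (cont_sum (F := fun a mu => mu a * c a)) => a.
by apply: (cont_ext (g := fun mu => c a * mu a)); [move=> y; ring | apply/cont_scal/cont_proj].
Qed.

Lemma closed_ext (K K' : (A -> R) -> Prop) :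
  (forall x, K x <-> K' x) -> closed_set K' -> closed_set K.
Proof.
move=> H hK x hx; have hx' : ~ K' x by rewrite -H.
by case: (hK x hx') => e [he He]; exists e; split => // y Hy; rewrite H; exact: He.
Qed.

Lemma closed_ge f : cont f -> closed_set (fun x => 0 <= f x).
Proof.
move=> hf x hx; case: (hf x (- f x)) => [|d [hd H]]; first lra.
by exists d; split => // y Hy; have := Rabs_def2 _ _ (H y Hy); lra.
Qed.

Lemma closed_eq f c : cont f -> closed_set (fun x => f x = c).
Proof.
move=> hf x hx; case: (hf x (Rabs (f x - c))) => [|d [hd H]].
  by apply: Rabs_pos_lt => h; apply: hx; lra.
exists d; split => // y Hy E; have := H y Hy; rewrite E.
have -> : c - f x = - (f x - c) by ring.
by rewrite Rabs_Ropp; lra.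
Qed.

Lemma closed_and K1 K2 : closed_set K1 -> closed_set K2 -> closed_set (fun x => K1 x /\ K2 x).
Proof.
move=> h1 h2 x hx; case: (classic (K1 x)) => H1.
- have H2 : ~ K2 x by move=> H2; apply: hx.
  by case: (h2 x H2) => e [he He]; exists e; split => // y Hy [_ ?]; exact: (He y Hy).
- by case: (h1 x H1) => e [he He]; exists e; split => // y Hy [? _]; exact: (He y Hy).
Qed.

Lemma closed_all (I : Type) (K : I -> (A -> R) -> Prop) :
  (forall i, closed_set (K i)) -> closed_set (fun x => forall i, K i x).
Proof.
move=> h x hx.
have [i Hi] : exists i, ~ K i x.
  by apply: NNPP => H; apply: hx => i; apply: NNPP => H'; apply: H; exists i.
by case: (h i x Hi) => e [he He]; exists e; split => // y Hy H; exact: (He y Hy (H i)).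
Qed.

End Topology.

Lemma nested_intervals (c r : nat -> R) :
  (forall n, 0 < r n) ->
  (forall n, c n <= c n.+1 /\ c n.+1 + r n.+1 <= c n + r n) ->
  exists x, forall n, c n <= x <= c n + r n.
Proof.
move=> rpos nest.
have mono n : c n <= c n.+1 by case: (nest n).
have upper n k : c (n + k)%N + r (n + k)%N <= c n + r n.
  elim: k => [|k IH]; first by rewrite addn0; lra.
  by rewrite addnS; have := nest (n + k)%N; lra.
have ub : has_ub c.
  by exists (c 0%nat + r 0%nat) => y [i ->]; have := upper 0%nat i; rewrite add0n; have := rpos i; lra.
case: (growing_cv c mono ub) => x Hx; exists x => n; split.
  exact: growing_ineq _ _ mono Hx n.
apply: Rnot_lt_le => Hl; case: (Hx (x - (c n + r n))) => [|N HN]; first lra.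
have := HN (Nat.max N n) (Nat.le_max_l _ _); rewrite /R_dist => /Rabs_def2.
have -> : Nat.max N n = (n + (Nat.max N n - n))%N by rewrite subnKC //; apply/leP; lia.
by have := upper n (Nat.max N n - n)%N; have := rpos (n + (Nat.max N n - n))%N; lra.
Qed.

Lemma half_pow_small e : 0 < e -> exists n, (/ 2) ^ n < e.
Proof.
move=> he; case: (pow_lt_1_zero (/ 2) _ e he) => [|N HN]; first by rewrite Rabs_right; lra.
exists N; have := HN N (Nat.le_refl _); rewrite Rabs_right //.
by left; apply: pow_lt; lra.
Qed.

(* By
   bisection, a subset without finite subcover would yield nested subcubes
   without finite subcover shrinking to a point of K, which lies in some
   open U i containing all small cubes around it. *)
Section HeineBorel.
Variable A : finType.
Variable K : (A -> R) -> Prop.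
Hypothesis K_closed : closed_set K.
Hypothesis K_cube : forall x, K x -> forall a, 0 <= x a <= 1.
Variables (I : Type) (U : I -> (A -> R) -> Prop).
Hypothesis U_open : forall i, Defs.open_set (U i).

Definition covered (S : (A -> R) -> Prop) : Prop :=
  exists l : list I, forall x, S x -> exists i, In i l /\ U i x.

Definition cube (c : A -> R) (r : R) (x : A -> R) : Prop := forall a, c a <= x a <= c a + r.

Definition uncovered_cube (c : A -> R) (r : R) : Prop := ~ covered (fun x => K x /\ cube c r x).

Lemma covered_mono (S S' : (A -> R) -> Prop) : (forall x, S x -> S' x) -> covered S' -> covered S.
Proof. by move=> H [l Hl]; exists l => x /H; exact: Hl. Qed.

Lemma covered_union (T : eqType) (s : seq T) (S : T -> (A -> R) -> Prop) :
  (forall t, t \in s -> covered (S t)) -> covered (fun x => exists t, t \in s /\ S t x).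
Proof.
elim: s => [|t s IH] H; first by exists nil => x [t []].
case: (H t (mem_head _ _)) => l1 H1.
case: IH => [u hu|l2 H2]; first by apply: H; rewrite in_cons hu orbT.
exists (l1 ++ l2) => x [u [hu Hu]]; move: hu; rewrite in_cons => /orP [/eqP E|hu].
- by subst u; case: (H1 x Hu) => i [hi Ui]; exists i; split => //; apply: in_or_app; left.
- case: (H2 x (ex_intro _ u (conj hu Hu))) => i [hi Ui].
  by exists i; split => //; apply: in_or_app; right.
Qed.

Lemma uncovered_half c r : 0 < r -> uncovered_cube c r ->
  exists c', uncovered_cube c' (r / 2) /\ forall a, c a <= c' a <= c a + r / 2.
Proof.
move=> hr hb; apply: NNPP => H; apply: hb.
pose cf (f : {ffun A -> bool}) a := c a + (if f a then r / 2 else 0).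
have Hcf f : covered (fun x => K x /\ cube (cf f) (r / 2) x).
  apply: NNPP => Hn; apply: H; exists (cf f); split => // a.
  by rewrite /cf; case: (f a); lra.
apply: (covered_mono (S' := fun x => exists f, f \in enum {ffun A -> bool} /\
                                                 (K x /\ cube (cf f) (r / 2) x))).
  move=> x [Kx Bx].
  exists [ffun a => if Rlt_dec (c a + r / 2) (x a) then true else false].
  split; first by rewrite mem_enum.
  by split => // a; rewrite /cf ffunE; have := Bx a; case: Rlt_dec => h /= Hb; lra.
by apply: covered_union => f _; exact: Hcf.
Qed.

Lemma half_step_exists c r : exists c',
  (0 < r /\ uncovered_cube c r) ->
  uncovered_cube c' (r / 2) /\ forall a, c a <= c' a <= c a + r / 2.
Proof.
case: (classic (0 < r /\ uncovered_cube c r)) => [[h1 h2]|h]; last by exists c.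
by case: (uncovered_half h1 h2) => c' hc; exists c'.
Qed.

Definition half_step (c : A -> R) (r : R) : A -> R :=
  proj1_sig (constructive_indefinite_description _ (half_step_exists c r)).

Lemma half_step_spec c r : 0 < r -> uncovered_cube c r ->
  uncovered_cube (half_step c r) (r / 2) /\ forall a, c a <= half_step c r a <= c a + r / 2.
Proof. by rewrite /half_step; case: constructive_indefinite_description => /= c' H h1 h2; exact: H. Qed.

Fixpoint corner (n : nat) : A -> R :=
  match n with 0%nat => fun _ => 0 | S m => half_step (corner m) ((/ 2) ^ m) end.

Lemma corner_spec : uncovered_cube (fun _ => 0) 1 -> forall n,
  uncovered_cube (corner n) ((/ 2) ^ n) /\
  forall a, corner n a <= corner n.+1 a /\ corner n.+1 a + (/ 2) ^ n.+1 <= corner n a + (/ 2) ^ n.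
Proof.
move=> H0; suff inv n : uncovered_cube (corner n) ((/ 2) ^ n).
  move=> n; split => // a.
  have hr : 0 < (/ 2) ^ n by apply: pow_lt; lra.
  case: (half_step_spec hr (inv n)) => _ /(_ a) /=; lra.
elim: n => [|n IH] //=; rewrite (_ : / 2 * (/ 2) ^ n = (/ 2) ^ n / 2); last by field.
by apply: (half_step_spec _ IH).1; apply: pow_lt; lra.
Qed.

Lemma closed_cube_covered : (forall x, K x -> exists i, U i x) -> covered K.
Proof.
move=> Hcov; apply: NNPP => H.
have H0 : uncovered_cube (fun _ => 0) 1.
  move=> [l Hl]; apply: H; exists l => x Kx; apply: Hl; split => // a.
  by have := K_cube Kx a; lra.
have inv := corner_spec H0.
have rpos n : 0 < (/ 2) ^ n by apply: pow_lt; lra.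
have [x Hx] : exists x, forall n, cube (corner n) ((/ 2) ^ n) x.
  have pt a := nested_intervals (c := fun n => corner n a) rpos (fun n => (inv n).2 a).
  by exists (fun a => proj1_sig (constructive_indefinite_description _ (pt a))) => n a;
    case: constructive_indefinite_description.
have near n y : cube (corner n) ((/ 2) ^ n) y -> forall a, Rabs (y a - x a) <= (/ 2) ^ n.
  by move=> Hy a; apply: Rabs_le; have := Hy a; have := Hx n a; lra.
have Kx : K x.
  apply: NNPP => Hn; case: (K_closed Hn) => e [he He]; case: (half_pow_small he) => n hn.
  apply: (inv n).1; exists nil => y [Ky By]; exfalso.
  by apply: (He y) => // a; have := near n y By a; lra.
case: (Hcov x Kx) => i Ui; case: (U_open Ui) => e [he He]; case: (half_pow_small he) => n hn.
apply: (inv n).1; exists (i :: nil) => y [Ky By]; exists i; split; first by left.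
by apply: He => a; have := near n y By a; lra.
Qed.

End HeineBorel.

Lemma compact_cube (A : finType) (K : (A -> R) -> Prop) :
  closed_set K -> (forall x, K x -> forall a, 0 <= x a <= 1) -> compact_set K.
Proof. by move=> HK Hb I U HU Hcov; exact: (closed_cube_covered HK Hb HU Hcov). Qed.

Lemma nested_closed_nonempty (A : finType) (K : nat -> (A -> R) -> Prop) :
  (forall N, closed_set (K N)) -> (forall N x, K N.+1 x -> K N x) ->
  (forall N, exists x, K N x) -> (forall x, K 0%nat x -> forall a, 0 <= x a <= 1) ->
  exists x, forall N, K N x.
Proof.
move=> Hcl Hdec Hne Hb; apply: NNPP => H.
case: (compact_cube (Hcl 0%nat) Hb (U := fun N x => ~ K N x)).
- move=> N x hx; case: (Hcl N x hx) => e [he He]; exists e; split => //.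
- move=> x _; apply: NNPP => H2; apply: H; exists x => N.
  by apply: NNPP => H3; apply: H2; exists N.
move=> l Hl.
have inM l' N : In N l' -> (N <= fold_right Nat.max 0%nat l')%N.
  elim: l' => // b l' IH /= [->|hN]; apply/leP; first exact: Nat.le_max_l.
  by apply: Nat.le_trans (Nat.le_max_r b _); apply/leP; exact: IH.
pose M := fold_right Nat.max 0%nat l.
have down N k x : K (N + k)%N x -> K N x.
  by elim: k => [|k IH]; [rewrite addn0 | rewrite addnS => /Hdec /IH].
case: (Hne M) => z Kz; case: (Hl z (down 0%nat M z Kz)) => N [hN HN]; apply: HN.
by apply: (down N (M - N)%N); rewrite subnKC //; exact: inM.
Qed.

Section Signs.
Variable A : finType.

Definition positive_kernel (u : A -> R) : Prop :=
  exists x, (forall a, 0 < x a) /\ Rsum (fun a => x a * u a) = 0.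

Definition both_signs (u : A -> R) : Prop :=
  ((exists a, 0 < u a) -> exists b, u b < 0) /\ ((exists b, u b < 0) -> exists a, 0 < u a).

Lemma positive_kernel_signs u : positive_kernel u -> both_signs u.
Proof.
move=> [g [Hg Hs]]; split.
- move=> [a ha]; apply: NNPP => H.
  have Hnn b : 0 <= g b * u b.
    by apply: Rmult_le_pos; [left; exact: Hg | apply: Rnot_lt_le => hb; apply: H; exists b].
  by have := Rsum_ge_term a Hnn; have := Hg a; nra.
- move=> [a ha]; apply: NNPP => H.
  have Hnn b : 0 <= -1 * (g b * u b).
    have : ~ 0 < u b by move=> hb; apply: H; exists b.
    by have := Hg b; nra.
  by have := Rsum_ge_term a Hnn; rewrite Rsum_scal Hs; have := Hg a; nra.
Qed.

(* weights: the total negative part on the positive letters, the total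
   positive part on the negative ones *)
Lemma signs_positive_kernel u : both_signs u -> positive_kernel u.
Proof.
move=> [H1 H2].
pose pos a := Rmax (u a) 0; pose neg a := Rmax (- u a) 0.
have hp a : 0 <= pos a by apply: Rmax_r.
have hn a : 0 <= neg a by apply: Rmax_r.
exists (fun a => if Rlt_dec 0 (u a) then Rsum neg else if Rlt_dec (u a) 0 then Rsum pos else 1).
split.
- move=> a; case: Rlt_dec => h1 /=.
    case: H1; first by exists a.
    by move=> b hb; apply: Rlt_le_trans (Rsum_ge_term b hn); rewrite /neg Rmax_left; lra.
  case: Rlt_dec => h2 /=; last lra.
  case: H2; first by exists a.
  by move=> b hb; apply: Rlt_le_trans (Rsum_ge_term b hp); rewrite /pos Rmax_left; lra.
- rewrite (Rsum_ext (g := fun a => Rsum neg * pos a + (- Rsum pos) * neg a)).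
    by rewrite Rsum_lin; ring.
  move=> a; rewrite /pos /neg; case: Rlt_dec => h1 /=.
    by rewrite Rmax_left ?Rmax_right; lra.
  case: Rlt_dec => h2 /=; first by rewrite Rmax_right ?Rmax_left; lra.
  have -> : u a = 0 by lra.
  by rewrite Ropp_0 Rmax_left; lra.
Qed.

Lemma both_signs_comp (f : R -> R) u :
  (forall r, 0 < r <-> 0 < f r) -> (forall r, r < 0 <-> f r < 0) ->
  both_signs u <-> both_signs (fun a => f (u a)).
Proof.
move=> Ep En; split => [[h1 h2]|[h1 h2]]; split.
- move=> [a /(Ep (u a)).2 ha]; case: h1; first by exists a.
  by move=> b /(En (u b)).1 hb; exists b.
- move=> [a /(En (u a)).2 ha]; case: h2; first by exists a.
  by move=> b /(Ep (u b)).1 hb; exists b.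
- move=> [a /(Ep (u a)).1 ha]; case: h1; first by exists a.
  by move=> b /(En (u b)).2 hb; exists b.
- move=> [a /(En (u a)).1 ha]; case: h2; first by exists a.
  by move=> b /(Ep (u b)).2 hb; exists b.
Qed.

Lemma both_signs_exp v : both_signs v <-> both_signs (fun a => exp (v a) - 1).
Proof.
apply: (both_signs_comp (f := fun r => exp r - 1)) => r; split => h.
- by have := exp_increasing _ _ h; rewrite exp_0; lra.
- by apply: exp_lt_inv; rewrite exp_0; lra.
- by have := exp_increasing _ _ h; rewrite exp_0; lra.
- by apply: exp_lt_inv; rewrite exp_0; lra.
Qed.

End Signs.

Section Main.
Variable A : finType.
Variables (pi : comb_data A) (eps : nat -> bool) (a0 : A).
Hypothesis pi_valid : valid_comb pi.
Hypothesis eps_complete : inf_complete pi eps.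

Local Notation aT m := (top_last pi eps a0 m).
Local Notation aB m := (bot_last pi eps a0 m).
Local Notation Gw w n lam := (lengths pi eps a0 w n lam).
Local Notation Vw w n := (log_slopes pi eps a0 w n).

Lemma cont_lengths w n a : cont (fun lam => Gw w n lam a).
Proof.
elim: n a => [|n IH] a; first exact: cont_proj.
have He := exp_pos (Vw w n (aB n)).
case: (letter_cases pi eps a0 n a) => [->|[->|[h1 h2]]].
- apply: (cont_ext (g := fun lam => if eps n
      then Gw w n lam (aT n) - exp (Vw w n (aB n)) * Gw w n lam (aB n)
      else / exp (Vw w n (aB n)) * Gw w n lam (aT n))).
    by move=> y /=; rewrite (len_step_top a0) //; case: (eps n) => //; rewrite /Rdiv Rmult_comm.
  by case: (eps n); [apply: cont_sub => //; exact: cont_scal | exact: cont_scal].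
- apply: (cont_ext (g := fun lam => if eps n then Gw w n lam (aB n)
      else Gw w n lam (aB n) - / exp (Vw w n (aB n)) * Gw w n lam (aT n))).
    by move=> y /=; rewrite (len_step_bot a0) //; case: (eps n) => //; rewrite /Rdiv Rmult_comm.
  by case: (eps n) => //; apply: cont_sub => //; exact: cont_scal.
- by apply: (cont_ext (g := fun lam => Gw w n lam a)) => // y /=; rewrite len_step_other.
Qed.

Lemma balance_iff (w lam : A -> R) : Rsum lam = Rsum (fun a => exp (w a) * lam a) <->
  Rsum (fun a => lam a * (exp (w a) - 1)) = 0.
Proof.
rewrite (Rsum_ext (f := fun a => lam a * (exp (w a) - 1)) (g := fun a => exp (w a) * lam a - lam a));
  last by move=> a; ring.
by rewrite Rsum_sub; split; lra.
Qed.

Lemma Aff_iff (w lam : A -> R) : Aff pi eps w lam <->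
  (forall a, 0 < lam a) /\ Rsum (fun a => lam a * (exp (w a) - 1)) = 0 /\
  forall n a, 0 < Gw w n lam a.
Proof.
rewrite /Aff -balance_iff; split => [[h1 [h2 h3]]|[h1 [h2 h3]]]; do 2 split => //.
- by rewrite -(follows_path_iff a0).
- by rewrite (follows_path_iff a0).
Qed.

Lemma std_path_iff lam : (forall a, 0 < lam a) ->
  (rv_path_is (std_iem pi lam) eps <-> forall n a, 0 < Gw (fun _ => 0) n lam a).
Proof.
move=> h.
have -> : std_iem pi lam = aff_of pi lam (fun _ => 0).
  by congr AIem; apply: functional_extensionality => a; rewrite exp_0; ring.
apply: (follows_path_iff a0) => //.
by apply: Rsum_ext => a; rewrite exp_0; ring.
Qed.

Definition level_set w (c : A -> R) N (mu : A -> R) : Prop :=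
  (forall a, 0 <= mu a) /\ Rsum mu = 1 /\ Rsum (fun a => mu a * c a) = 0 /\
  forall a, 0 <= Gw w N mu a.

Lemma level_set_nonempty w N (c c' : A -> R) :
  (forall mu, Rsum (fun a => Gw w N mu a * c' a) = Rsum (fun a => mu a * c a)) ->
  positive_kernel c' -> exists mu, level_set w c N mu.
Proof.
move=> pairing [x [hx hxc]].
case: (lengths_surj a0 pi_valid eps_complete w N x) => mu0 H0.
have nn0 a : 0 <= mu0 a.
  have H := lengths_nonneg_before (a0 := a0) pi_valid eps_complete (w := w) (n := N) (lam := mu0).
  by apply: (H _ _ (leq0n N)) => b; rewrite H0; left.
set s := Rsum mu0.
have hs : 0 < s.
  case: (Rle_lt_or_eq_dec _ _ (Rsum_nonneg nn0)) => // /esym s0.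
  have Ez : mu0 = fun a => 0 * mu0 a.
    apply: functional_extensionality => a.
    by have := Rsum_ge_term a nn0; have := nn0 a; rewrite /s in s0; lra.
  by have := hx a0; rewrite -H0 Ez (lengths_scal a0) //; lra.
have Hscal := lengths_scal a0 pi_valid eps_complete w N (/ s) mu0.
have hs' : 0 < / s by exact: Rinv_0_lt_compat.
exists (fun a => / s * mu0 a); split; first by move=> a; apply: Rmult_le_pos; [lra | exact: nn0].
split; first by rewrite Rsum_scal -/s; field; lra.
split.
  rewrite (Rsum_ext (g := fun a => / s * (mu0 a * c a))); last by move=> a; ring.
  by rewrite Rsum_scal -pairing H0 hxc; ring.
by move=> a; rewrite Hscal H0; apply: Rmult_le_pos; [lra | left].
Qed.

Lemma level_set_closed w c N : closed_set (level_set w c N).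
Proof.
apply: closed_and; first by apply: closed_all => a; apply: closed_ge; exact: cont_proj.
apply: closed_and.
  by apply: closed_eq; apply: (cont_sum (F := fun a mu => mu a)) => a; exact: cont_proj.
apply: closed_and; first by apply: closed_eq; exact: cont_lin.
by apply: closed_all => a; apply: closed_ge; exact: cont_lengths.
Qed.

(* compactness and infinity-completeness: solutions at every level give a
   positive solution for the whole path *)
Lemma limit_solution w c : (forall N, exists mu, level_set w c N mu) ->
  exists mu, (forall a, 0 < mu a) /\ Rsum (fun a => mu a * c a) = 0 /\
    forall n a, 0 < Gw w n mu a.
Proof.
move=> Hne; case: (nested_closed_nonempty (K := level_set w c)) => //.
- by move=> N; exact: level_set_closed.
- move=> N x [h1 [h2 [h3 h4]]]; do 3 split => //.
  by apply: (lengths_nonneg_before pi_valid eps_complete h4).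
- by move=> x [h1 [h2 _]] a; split => //; rewrite -h2; exact: Rsum_ge_term.
move=> mu Hmu.
have Hnn n a : 0 <= Gw w n mu a by case: (Hmu n) => _ [_ [_ h]].
have Hpos := lengths_pos pi_valid eps_complete Hnn (Rsum1_nonzero (Hmu 0%nat).2.1).
by exists mu; split; [exact: (Hpos 0%nat) | split; [exact: (Hmu 0%nat).2.2.1 | exact: Hpos]].
Qed.

Lemma Aff_nonempty_iff w : (exists lam, Aff pi eps w lam) <->
  (exists lam, (forall a, 0 < lam a) /\ Rsum (fun a => lam a * w a) = 0 /\
     rv_path_is (std_iem pi lam) eps).
Proof.
split.
- move=> [la /Aff_iff [l1 [l2 l3]]].
  case: (limit_solution (w := fun _ => 0) (c := w)) => [N|mu [m1 [m2 m3]]].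
  + apply: (level_set_nonempty (c' := Vw w N)); first exact: std_pairing.
    apply/signs_positive_kernel/(both_signs_exp _).2/positive_kernel_signs.
    exists (Gw w N la); split; first exact: l3.
    rewrite (Rsum_ext (g := fun a => (exp (Vw w N a) - 1) * Gw w N la a)); last by move=> a; ring.
    by rewrite (length_balance a0) // -l2; apply: Rsum_ext => a; ring.
  + by exists mu; do 2 (split => //); rewrite std_path_iff.
- move=> [mu [m1 [m2 /(std_path_iff m1) m3]]].
  case: (limit_solution (w := w) (c := fun a => exp (w a) - 1)) => [N|la [l1 [l2 l3]]].
  + apply: (level_set_nonempty (c' := fun a => exp (Vw w N a) - 1)).
      move=> la; rewrite (Rsum_ext (g := fun a => (exp (Vw w N a) - 1) * Gw w N la a)).
        by rewrite (length_balance a0) //; apply: Rsum_ext => a; ring.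
      by move=> a; ring.
    apply/signs_positive_kernel/(both_signs_exp (Vw w N)).1/positive_kernel_signs.
    exists (Gw (fun _ => 0) N mu); split; first exact: m3.
    by rewrite std_pairing.
  + by exists la; apply/Aff_iff.
Qed.

Lemma Aff1_convex w : convex_set (Aff1 pi eps w).
Proof.
move=> x y t [/Aff_iff [x1 [x2 x3]] x4] [/Aff_iff [y1 [y2 y3]] y4] ht; split.
- apply/Aff_iff; split; first by move=> a; have := x1 a; have := y1 a; nra.
  split.
    rewrite (Rsum_ext (g := fun a => t * (x a * (exp (w a) - 1)) + (1 - t) * (y a * (exp (w a) - 1)))).
      by rewrite Rsum_lin x2 y2; ring.
    by move=> a; ring.
  by move=> n a; rewrite (lengths_lin a0) //; have := x3 n a; have := y3 n a; nra.
- by rewrite Rsum_lin x4 y4; ring.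
Qed.

(* Aff^(1) is the intersection of the closed level sets for c = e^w - 1 *)
Lemma Aff1_compact w : compact_set (Aff1 pi eps w).
Proof.
apply: compact_cube.
- apply: (closed_ext (K' := fun la => forall N, level_set w (fun a => exp (w a) - 1) N la)).
    move=> la; split.
    + move=> [/Aff_iff [h1 [h2 h3]] h4] N.
      by split; [move=> a; left | split => //; split => // a; left].
    + move=> H; have [_ [h2 _]] := H 0%nat; split => //; apply/Aff_iff.
      have Hpos := lengths_pos pi_valid eps_complete (fun n => (H n).2.2.2) (Rsum1_nonzero h2).
      by split; [exact: (Hpos 0%nat) | split; [exact: (H 0%nat).2.2.1 | exact: Hpos]].
  by apply: closed_all => N; exact: level_set_closed.
- move=> la [/Aff_iff [h1 _] h2] a; split; first by left.
  by have := Rsum_ge_term a (fun b => Rlt_le _ _ (h1 b)); rewrite h2; lra.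
Qed.

End Main.

Theorem mainTheorem5 (A : finType) (pi : comb_data A) (eps : nat -> bool)
  (w : A -> R) :
  valid_comb pi -> irreducible pi ->
  inf_complete pi eps ->
  (exists a : A, w a <> 0) ->
  ((exists lam, Aff pi eps w lam) <->
   (exists lam : A -> R, (forall a, 0 < lam a) /\
      Rsum (fun a => lam a * w a) = 0 /\
      rv_path_is (std_iem pi lam) eps))
  /\
  ((exists lam, Aff pi eps w lam) ->
     convex_set (Aff1 pi eps w) /\ compact_set (Aff1 pi eps w)).
Proof.
move=> pi_valid _ eps_complete [a0 _]; split.
- exact: (Aff_nonempty_iff a0 pi_valid eps_complete w).
- move=> _; split.
  + exact: (Aff1_convex a0 pi_valid eps_complete (w := w)).
  + exact: (Aff1_compact a0 pi_valid eps_complete (w := w)).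
Qed.
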